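(* Let $K$ be a field, $q\in K[x_1]\setminus K$, and let $f,g\in R_q[\tilde{\bm{x}}]\setminus R_q$ be such that $\operatorname{lm}(f)$ and $\operatorname{lm}(g)$ are relatively prime. Let $l_f:=\iota_q(\operatorname{lc}(f))$, $l_g:=\iota_q(\operatorname{lc}(g))$, $d:=\gcd(l_f,l_g)$, $f_1:=f-\operatorname{lt}(f)$, $g_1:=g-\operatorname{lt}(g)$. Then $$\sigma_q(d)\cdot S(f,g)=f_1\cdot\operatorname{lt}(g)-g_1\cdot\operatorname{lt}(f)=f_1g-g_1f.$$
   Context: $R_q:=\{r\in K[x_1]:\deg r<\deg q\}$ with operations modulo $q$ ($R_q\cong K[x_1]/(q)$); $R_q^\times$ its units. $\sigma_q:K[x_1]\to R_q$ is reduction modulo $q$ and $\iota_q:R_q\hookrightarrow K[x_1]$ the inclusion, both extended coefficientwise to polynomials in $\tilde{\bm{x}}=(x_2,\dots,x_n)$. A monomial ordering on monomials in $\tilde{\bm{x}}$ is fixed; for nonzero $f\in R_q[\tilde{\bm{x}}]$, $\operatorname{lm}(f)$, $\operatorname{lc}(f)$, $\operatorname{lt}(f)=\operatorname{lc}(f)\operatorname{lm}(f)$ are the leading monomial, coefficient and term. Gcds in $K[x_1]$ are monic and $\operatorname{lcm}(a,b)=ab/\gcd(a,b)$. For $f\in R_q[\tilde{\bm{x}}]\setminus R_q$ and $g\in R_q[\tilde{\bm{x}}]\setminus(R_q^\times\cup\{0\})$, with $m_f:=\sigma_q(\operatorname{lcm}(l_f,l_g)/l_f)$, $m_g:=\sigma_q(\operatorname{lcm}(l_f,l_g)/l_g)$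 and $\tilde{\bm{x}}^\gamma:=\operatorname{lcm}(\operatorname{lm}f,\operatorname{lm}g)$, the $S$-polynomial is $S(f,g):=\frac{m_f\tilde{\bm{x}}^\gamma}{\operatorname{lm}(f)}f-\frac{m_g\tilde{\bm{x}}^\gamma}{\operatorname{lm}(g)}g$. *)

From HB Require Import structures.
From mathcomp Require Import all_boot all_algebra.
From mathcomp Require Import qpoly.
From mathcomp Require Import mpoly.

Set Implicit Arguments.
Unset Strict Implicit.
Unset Printing Implicit Defensive.

Import GRing.Theory.
Local Open Scope ring_scope.

Definition monomial_order (n : nat) (le : rel 'X_{1..n}) : Prop :=
  [/\ reflexive le, transitive le, antisymmetric le & total le] /\
  (forall m, le 0%MM m) /\
  (forall m1 m2 m, le m1 m2 -> le (m1 + m)%MM (m2 + m)%MM).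

Section LeadingTerms.
Variables (R : nzRingType) (n : nat) (le : rel 'X_{1..n}).

(* leading monomial w.r.t. le: the le-maximum of the support (0%MM for p = 0) *)
Definition lm (p : {mpoly R[n]}) : 'X_{1..n} :=
  foldr (fun m acc => if le acc m then m else acc) 0%MM (msupp p).

Definition lc (p : {mpoly R[n]}) : R := p@_(lm p).
Definition lt (p : {mpoly R[n]}) : {mpoly R[n]} := lc p *: 'X_[lm p].

End LeadingTerms.

Definition mcoprime (n : nat) (m1 m2 : 'X_{1..n}) : bool :=
  mlcm m1 m2 == (m1 + m2)%MM.

(* R_q = K[x1]/(q), represented by the polynomials of degree < deg q.      *)
(* mathcomp's {poly %/ h} requires a monic h; (q) = (monic q) as ideals.   *)
Section Rq.
Variables (K : fieldType).

Definition monicq (q : {poly K}) : {poly K} := (lead_coef q)^-1 *: q.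


Definition sigmaq (q : {poly K}) (p : {poly K}) : {poly %/ monicq q} :=
  in_qpoly (monicq q) p.

Definition iotaq (q : {poly K}) (r : {poly %/ monicq q}) : {poly K} := r.

Definition gcdm (a b : {poly K}) : {poly K} :=
  (lead_coef (gcdp a b))^-1 *: gcdp a b.
Definition lcmm (a b : {poly K}) : {poly K} := (a * b) %/ gcdm a b.

Definition Spoly (q : {poly K}) (n : nat) (le : rel 'X_{1..n})
  (f g : {mpoly {poly %/ monicq q}[n]}) : {mpoly {poly %/ monicq q}[n]} :=
  let lf := iotaq (lc le f) in
  let lg := iotaq (lc le g) in
  let mf := sigmaq q (lcmm lf lg %/ lf) in
  let mg := sigmaq q (lcmm lf lg %/ lg) in
  let gamma := mlcm (lm le f) (lm le g) in
  (mf *: 'X_[(gamma - lm le f)%MM]) * f - (mg *: 'X_[(gamma - lm le g)%MM]) * g.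

End Rq.

(** Since lm f and lm g are coprime, lcm(lm f, lm g) / lm f = lm g and
    lcm(lm f, lm g) / lm g = lm f; and d * (lcm(l_f, l_g) / l_f) = l_g,
    d * (lcm(l_f, l_g) / l_g) = l_f in K[x_1], hence also in R_q. So
    sigma_q(d) S(f, g) = lt(g) f - lt(f) g, and both stated forms are
    rearrangements of this, using f = lt(f) + f_1 and g = lt(g) + g_1. *)
From HB Require Import structures.
From mathcomp Require Import all_boot all_algebra.
From mathcomp Require Import qpoly.
From mathcomp Require Import mpoly.
From mathcomp Require Import ring.
Import GRing.Theory.
Local Open Scope ring_scope.

Section LeadingTerm.
Variables (R : nzRingType) (n : nat) (le : rel 'X_{1..n}).
Hypothesis le0m : forall m, le 0%MM m.

Lemma lm_msupp (p : {mpoly R[n]}) : p != 0 -> lm le p \in msupp p.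
Proof.
move=> pn0; have : msupp p != [::].
  apply: contra pn0 => /eqP supp0; apply/eqP/mpolyP => m.
  by apply/eqP; rewrite mcoeff0 -[_ == 0]negbK -mcoeff_msupp supp0.
rewrite /lm; elim: (msupp p) => [//|m s IH] _ /=.
case: s IH => [_ | m' s IH] /=; first by rewrite le0m mem_head.
by case: ifP => _; rewrite ?mem_head // in_cons IH ?orbT.
Qed.

Lemma lc_eq0 (p : {mpoly R[n]}) : (lc le p == 0) = (p == 0).
Proof.
have [-> | pn0] := eqVneq p 0; first by rewrite /lc mcoeff0 eqxx.
by apply/negbTE; rewrite -mcoeff_msupp lm_msupp.
Qed.

End LeadingTerm.

Section MonicGcd.
Variable K : fieldType.
Implicit Types a b : {poly K}.

Lemma gcdm_eqp a b : gcdm a b %= gcdp a b.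
Proof.
have [gn0 | gn0] := eqVneq (gcdp a b) 0; first by rewrite /gcdm gn0 scaler0 eqpxx.
by rewrite eqp_scale // invr_eq0 lead_coef_eq0.
Qed.

Lemma gcdm_dvdl a b : gcdm a b %| a.
Proof. by rewrite (eqp_dvdl _ (gcdm_eqp a b)) dvdp_gcdl. Qed.

Lemma gcdm_dvdr a b : gcdm a b %| b.
Proof. by rewrite (eqp_dvdl _ (gcdm_eqp a b)) dvdp_gcdr. Qed.

Lemma gcdm_mul_lcmm_divl a b : a != 0 -> gcdm a b * (lcmm a b %/ a) = b.
Proof.
by move=> an0; rewrite /lcmm -divp_mulA ?gcdm_dvdr // mulKp // divpKC ?gcdm_dvdr.
Qed.

Lemma gcdm_mul_lcmm_divr a b : b != 0 -> gcdm a b * (lcmm a b %/ b) = a.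
Proof.
by move=> bn0; rewrite /lcmm -divp_mulAC ?gcdm_dvdl // mulpK // divpKC ?gcdm_dvdl.
Qed.

End MonicGcd.

Section SPolynomial.
Variables (K : fieldType) (q : {poly K}).
Local Notation Rq := {poly %/ monicq q}.

Lemma iotaqK : cancel (@iotaq K q) (sigmaq q).
Proof. by move=> r; apply: val_inj; exact: in_qpoly_small (size_mk_monic r). Qed.

Lemma iotaq_eq0 (r : Rq) : (iotaq r == 0) = (r == 0).
Proof. by []. Qed.

Lemma sigmaq_gcdm_mul_lcmm_divl (r s : Rq) : r != 0 ->
  sigmaq q (gcdm (iotaq r) (iotaq s)) * sigmaq q (lcmm (iotaq r) (iotaq s) %/ iotaq r) = s.
Proof. by move=> rn0; rewrite -rmorphM gcdm_mul_lcmm_divl ?iotaq_eq0 //; exact: iotaqK. Qed.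

Lemma sigmaq_gcdm_mul_lcmm_divr (r s : Rq) : s != 0 ->
  sigmaq q (gcdm (iotaq r) (iotaq s)) * sigmaq q (lcmm (iotaq r) (iotaq s) %/ iotaq s) = r.
Proof. by move=> sn0; rewrite -rmorphM gcdm_mul_lcmm_divr ?iotaq_eq0 //; exact: iotaqK. Qed.

Lemma Spoly_mcoprime n (le : rel 'X_{1..n}) (f g : {mpoly Rq[n]}) :
  lc le f != 0 -> lc le g != 0 -> mcoprime (lm le f) (lm le g) ->
  sigmaq q (gcdm (iotaq (lc le f)) (iotaq (lc le g))) *: Spoly le f g =
    lt le g * f - lt le f * g.
Proof.
move=> lcf_n0 lcg_n0 /eqP lcm_lm; rewrite /Spoly lcm_lm addmK (addmC (lm le f)) addmK.
rewrite scalerBr -!scalerAl !scalerA.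
by rewrite sigmaq_gcdm_mul_lcmm_divl // sigmaq_gcdm_mul_lcmm_divr.
Qed.

End SPolynomial.

Theorem lemma5p5 (K : fieldType) (q : {poly K}) (n : nat)
  (le : rel 'X_{1..n}) (f g : {mpoly {poly %/ monicq q}[n]}) :
  (1 < size q)%N ->
  monomial_order le ->
  (forall c : {poly %/ monicq q}, f != c%:MP) ->
  (forall c : {poly %/ monicq q}, g != c%:MP) ->
  mcoprime (lm le f) (lm le g) ->
  let lf := iotaq (lc le f) in
  let lg := iotaq (lc le g) in
  let d := gcdm lf lg in
  let f1 := f - lt le f in
  let g1 := g - lt le g in
  sigmaq q d *: Spoly le f g = f1 * lt le g - g1 * lt le f /\
  f1 * lt le g - g1 * lt le f = f1 * g - g1 * f.
Proof.
move=> _ [_ [le0m _]] f_nconst g_nconst lm_coprime lf lg d f1 g1.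
have lcf_n0 : lc le f != 0 by rewrite lc_eq0 //; have := f_nconst 0; rewrite raddf0.
have lcg_n0 : lc le g != 0 by rewrite lc_eq0 //; have := g_nconst 0; rewrite raddf0.
have -> : sigmaq q d *: Spoly le f g = lt le g * f - lt le f * g.
  exact: Spoly_mcoprime.
by rewrite /f1 /g1; split; ring.
Qed.
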